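(* Let $P$ be a countable multiset of primes, $G=\bigoplus_{p\in P}\mathbb{F}_p$, and let $X$ be an ergodic $G$-system. Let $F:X\to S^1$ be a phase polynomial of degree $<k$ taking values in $C_n$, where $n=p_1\cdots p_j$ for primes $p_1,\dots,p_j$ with $k<p_i$ for all $i$. Then for every $g\in G$, $\prod_{t=0}^{n-1}F(T_g^tx)=1$ for a.e. $x\in X$.
   Context: $C_n$ is the group of $n$-th roots of unity. A $G$-system is a compact metrizable probability space with measure-preserving $G$-action $(T_g)$; ergodic: only constants invariant. Phase polynomial of degree $<k$: $\Delta_{h_1}\cdots\Delta_{h_k}F=1$ a.e. for all $h_i\in G$, where $\Delta_h\phi=(\phi\circ T_h)/\phi$. *)

From HB Require Import structures.
From mathcomp Require Import all_boot all_algebra.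
From mathcomp Require Import all_classical all_reals all_analysis.
From mathcomp Require Import complex.

Set Implicit Arguments.
Unset Strict Implicit.
Unset Printing Implicit Defensive.

Import GRing.Theory Num.Theory.
Local Open Scope ring_scope.
Local Open Scope classical_set_scope.

(* The group G = (+)_{i in I} F_{p i}, for a countable multiset of     *)
(* primes P given as a family p : I -> nat over a countable index type *)
(* I.  An element is a finitely supported g : I -> nat with g i < p i; *)

Section DirectSum.
Variables (I : countType) (p : I -> nat).

Definition in_dsum (g : I -> nat) : Prop :=
  (forall i, (g i < p i)%N) /\ finite_set [set i | g i != 0%N].

Record dsum := Dsum { dval : I -> nat; dvalP : in_dsum dval }.

Lemma dsum_add_proof (g h : dsum) :
  in_dsum (fun i => ((dval g i + dval h i) %% p i)%N).
Proof.
case: g => g [gp gf]; case: h => h [hp hf] /=; split.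
  by move=> i; rewrite ltn_pmod //; apply: leq_ltn_trans (gp i).
apply: (@sub_finite_set _ _ ([set i | g i != 0%N] `|` [set i | h i != 0%N])); last first.
  by rewrite finite_setU; split.
move=> i /= Hi; case: (eqVneq (g i) 0%N) => [g0|gi]; last by left.
right; apply/negP => /eqP h0; move: Hi; by rewrite g0 h0 mod0n.
Qed.

Definition dsum_add (g h : dsum) : dsum := Dsum (dsum_add_proof g h).

Definition dsum_is_zero (g : dsum) : Prop := forall i, dval g i = 0%N.

End DirectSum.

Section Systems.
Variables (I : countType) (p : I -> nat).
Variables (R : realType) (d : measure_display) (X : measurableType d).
Variables (mu : probability X R).

Definition measure_preserving_action (T : dsum p -> X -> X) : Prop :=
  [/\ (forall g, dsum_is_zero g -> T g = id),
      (forall g h, T (dsum_add g h) = T g \o T h),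
      (forall g, measurable_fun setT (T g)) &
      (forall g A, measurable A -> mu (T g @^-1` A) = mu A)].

Definition ergodic (T : dsum p -> X -> X) : Prop :=
  forall f : X -> R, measurable_fun setT f ->
    (forall g, {ae mu, forall x, f (T g x) = f x}) ->
    exists c : R, {ae mu, forall x, f x = c}.

Definition mderiv (T : dsum p -> X -> X) (h : dsum p) (phi : X -> R[i])
  : X -> R[i] := fun x => phi (T h x) / phi x.

Definition mderivs (T : dsum p -> X -> X) (hs : seq (dsum p)) (phi : X -> R[i])
  : X -> R[i] := foldr (mderiv T) phi hs.

Definition circle_measurable (F : X -> R[i]) : Prop :=
  [/\ measurable_fun setT (fun x => complex.Re (F x)),
      measurable_fun setT (fun x => complex.Im (F x)) &
      forall x, `|F x| = 1].

Definition phase_poly_lt (T : dsum p -> X -> X) (k : nat) (F : X -> R[i]) : Prop :=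
  circle_measurable F /\
  forall hs : seq (dsum p), size hs = k ->
    {ae mu, forall x, mderivs T hs F x = 1}.

End Systems.

From HB Require Import structures.
From mathcomp Require Import all_boot all_algebra.
From mathcomp Require Import all_classical all_reals all_analysis.
From mathcomp Require Import complex.

Set Implicit Arguments.
Unset Strict Implicit.
Unset Printing Implicit Defensive.

Import GRing.Theory Num.Theory.
Local Open Scope ring_scope.

(* Fix g and x, and put u t := F (T_g^t x).  Taking h_1 = ... = h_k = g in the
   phase-polynomial condition, and using that T_g preserves null sets, the
   k-th multiplicative difference of u vanishes for a.e. x.  The
   multiplicative Newton formula then gives u t = \prod_(j < k) c_j ^ C(t, j)
   with c_j := (Delta^j u) 0 an n-th root of unity, so by the hockey-stick
   identity \prod_(t < n) u t = \prod_(j < k) c_j ^ C(n, j+1).  Each such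
   binomial coefficient is divisible by n: n divides (j+1) C(n, j+1) = n C(n-1, j)
   and is coprime to j+1 <= k because its prime factors exceed k. *)

Lemma sum_bin_ord (t j : nat) : (\sum_(s < t) 'C(s, j))%N = 'C(t, j.+1).
Proof.
elim: t => [|t IHt]; first by rewrite big_ord0 bin0n.
by rewrite big_ord_recr /= IHt binS addnC.
Qed.

Lemma coprime_dvdn_binS (n m : nat) : coprime n m.+1 -> (n %| 'C(n, m.+1))%N.
Proof. by move=> co; rewrite -(Gauss_dvdr _ co) -mul_bin_diag dvdn_mulr. Qed.

Lemma coprime_prod_large_primes (k m : nat) (qs : seq nat) :
  (forall q, q \in qs -> prime q /\ (k < q)%N) -> (m < k)%N ->
  coprime (\prod_(q <- qs) q) m.+1.
Proof.
move=> Hqs lt_mk; elim: qs Hqs => [|q qs IHqs] Hqs; first by rewrite big_nil coprime1n.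
rewrite big_cons coprimeMl IHqs ?andbT; last first.
  by move=> r qs_r; apply: Hqs; rewrite inE qs_r orbT.
have [pr_q lt_kq] := Hqs q (mem_head _ _).
rewrite prime_coprime //; apply/negP => /(dvdn_leq (ltn0Sn m)).
by rewrite leqNgt (leq_ltn_trans lt_mk lt_kq).
Qed.

Section MultiplicativeDifferences.
Variable K : fieldType.
Implicit Types (u : nat -> K) (N j k t : nat).

Definition dquot u : nat -> K := fun t => u t.+1 / u t.

Lemma dquot_neq0 u : (forall t, u t != 0) -> forall t, dquot u t != 0.
Proof. by move=> u_neq0 t; rewrite mulf_neq0 ?invr_eq0. Qed.

Lemma dquot_expr_eq1 N u : (forall t, u t ^+ N = 1) -> forall t, dquot u t ^+ N = 1.
Proof. by move=> uN1 t; rewrite expr_div_n !uN1 divr1. Qed.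

Lemma iter_dquot_expr_eq1 N j u :
  (forall t, u t ^+ N = 1) -> forall t, iter j dquot u t ^+ N = 1.
Proof. by elim: j => [|j IHj] //= uN1; apply/dquot_expr_eq1/IHj. Qed.

Lemma dquot_telescope u : (forall t, u t != 0) ->
  forall t, u t = u 0%N * \prod_(s < t) dquot u s.
Proof.
move=> u_neq0; elim=> [|t IHt]; first by rewrite big_ord0 mulr1.
by rewrite big_ord_recr /= mulrA -IHt mulrCA mulfV ?mulr1.
Qed.

Lemma newton_dquot N k u : (forall t, u t != 0) ->
  (forall t, (t < N)%N -> iter k dquot u t = 1) ->
  forall t, (t < N)%N -> u t = \prod_(j < k) iter j dquot u 0%N ^+ 'C(t, j).
Proof.
elim: k u => [|k IHk] u u_neq0 uk1 t lt_tN; first by rewrite big_ord0; apply: uk1.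
have du_expand s : (s < N)%N ->
    dquot u s = \prod_(j < k) iter j dquot (dquot u) 0%N ^+ 'C(s, j).
  apply: IHk s; first exact: dquot_neq0.
  by move=> s lt_sN; rewrite -iterSr uk1.
rewrite (dquot_telescope u_neq0 t) big_ord_recl /= bin0 expr1; congr (_ * _).
rewrite (eq_bigr _ (fun (s : 'I_t) _ => du_expand s (ltn_trans (ltn_ord s) lt_tN))).
rewrite exchange_big /=; apply: eq_bigr => j _.
by rewrite prodrXr sum_bin_ord -iterSr.
Qed.

Lemma prod_eq1_iter_dquot N k u : (forall t, u t ^+ N = 1) ->
  (forall m, (m < k)%N -> (N %| 'C(N, m.+1))%N) ->
  (forall t, (t < N)%N -> iter k dquot u t = 1) ->
  \prod_(t < N) u t = 1.
Proof.
case: N => [|N] uN1 N_dvd_bin uk1; first by rewrite big_ord0.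
have u_neq0 t : u t != 0.
  by apply: contra_eq_neq (uN1 t) => ->; rewrite expr0n eq_sym oner_neq0.
rewrite (eq_bigr _ (fun (t : 'I_N.+1) _ => newton_dquot u_neq0 uk1 (ltn_ord t))).
rewrite exchange_big /=; apply: big1 => j _; rewrite prodrXr sum_bin_ord.
have /dvdnP [c ->] := N_dvd_bin j (ltn_ord j).
by rewrite exprM exprAC iter_dquot_expr_eq1 ?expr1n.
Qed.

End MultiplicativeDifferences.

Arguments dquot {K} u t.

Section NullSetsAlongIterates.
Local Open Scope classical_set_scope.
Variables (R : realType) (d : measure_display) (X : measurableType d).
Variables (mu : {measure set X -> \bar R}) (f : X -> X).
Hypothesis mf : measurable_fun setT f.
Hypothesis f_pres : forall A, measurable A -> mu (f @^-1` A) = mu A.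

Lemma ae_comp (P : X -> Prop) :
  {ae mu, forall x, P x} -> {ae mu, forall x, P (f x)}.
Proof.
move=> [N [mN N0 notP_N]]; exists (f @^-1` N); split.
- by rewrite -[X in measurable X]setTI; apply: mf.
- by rewrite f_pres.
- by move=> x /= notPfx; apply: notP_N.
Qed.

Lemma ae_iter (t : nat) (P : X -> Prop) :
  {ae mu, forall x, P x} -> {ae mu, forall x, P (iter t f x)}.
Proof.
elim: t P => [|t IHt] P aeP //.
have := ae_comp (IHt P aeP); apply: filterS => x.
by rewrite iterSr.
Qed.

End NullSetsAlongIterates.

Lemma mderivs_nseq_iter (I : countType) (p : I -> nat) (R : realType)
  (d : measure_display) (X : measurableType d) (T : dsum p -> X -> X)
  (g : dsum p) (F : X -> R[i]) (x : X) (j t : nat) :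
  mderivs T (nseq j g) F (iter t (T g) x)
  = iter j dquot (fun s => F (iter s (T g) x)) t.
Proof. by elim: j t => [|j IHj] t //=; rewrite /mderiv -iterS !IHj. Qed.

Theorem propositionB12
  (I : countType) (p : I -> nat) (Pprime : forall i, prime (p i))
  (R : realType) (d : measure_display) (X : measurableType d)
  (mu : probability X R) (T : dsum p -> X -> X)
  (HT : measure_preserving_action mu T) (Herg : ergodic mu T)
  (k : nat) (qs : seq nat)
  (Hqs : forall q, q \in qs -> prime q /\ (k < q)%N)
  (n : nat) (Hn : n = \prod_(q <- qs) q)
  (F : X -> R[i]) (HF : phase_poly_lt mu T k F)
  (HFn : forall x, F x ^+ n = 1) :
  forall g : dsum p,
    {ae mu, forall x, \prod_(t < n) F (iter t (T g) x) = 1}.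
Proof.
move=> g; case: HT => _ _ mT T_pres.
have diffs_orbit : {ae mu, forall x, forall t,
    mderivs T (nseq k g) F (iter t (T g) x) = 1}.
  apply: ae_foralln => t.
  exact: (ae_iter (mT g) (T_pres g) t (HF.2 _ (size_nseq k g))).
apply: filterS diffs_orbit => x diffs_x.
apply: (prod_eq1_iter_dquot (k := k) (u := fun t => F (iter t (T g) x)))
  => [t|m lt_mk|t _].
- exact: HFn.
- by rewrite Hn coprime_dvdn_binS // (coprime_prod_large_primes Hqs).
- by rewrite -(mderivs_nseq_iter T g F x k t) diffs_x.
Qed.
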